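(* Let $k$ be a field, $\lambda\in k$, and let $A$ be either $k[x]/(x^2-\lambda)$ or $k[x]/(x^2-x-\lambda)$. Equip $A$ with its universal calculus, which is free as a left module on $\omega=\mathrm{d}x$ with relation $\omega x=-x\omega$ in the first case and $\omega x=\omega-x\omega$ in the second case, and with $\Omega^2=A\,\mathrm{Vol}$ free on $\mathrm{Vol}=\omega\wedge\omega$, $\mathrm{d}\omega=0$. Then: (a) $\mathrm{Vol}$ is central, and every element $g\,\omega\otimes\omega$ ($g\in A$) of $\Omega^1\otimes_A\Omega^1$ is central; no nonzero such element is quantum symmetric. (b) The only torsion free left connection on $\Omega^1$ is $\nabla\omega=0$; it is a bimodule connection with $\sigma(\omega\otimes\omega)=-\omega\otimes\omega$. (c) For invertible $g\in A$, the metric $g\,\omega\otimes\omega$ admits a quantum Levi-Civita connection if and only if $g\in k\setminus\{0\}$, in which case the QLC is unique and equals $\nabla\omega=0$.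
   Context: A differential calculus on a unital algebra $A$ is an $A$-bimodule $\Omega^1$ with $\mathrm{d}:A\to\Omega^1$ satisfying the Leibniz rule and with $\Omega^1$ spanned by elements $a\,\mathrm{d}b$; it is extended to degree 2 by a bimodule $\Omega^2$, an associative product $\wedge$ and $\mathrm{d}:\Omega^1\to\Omega^2$ with $\mathrm{d}^2=0$ and the graded Leibniz rule. An element $g\in\Omega^1\otimes_A\Omega^1$ is central if $ag=ga$ for all $a\in A$; quantum symmetric if $\wedge(g)=0$; it is a (quantum) metric if invertible, i.e. there is a bimodule map $(\ ,\ ):\Omega^1\otimes_A\Omega^1\to A$ with $((\eta,\ )\otimes\mathrm{id})g=\eta=(\mathrm{id}\otimes(\ ,\eta))g$ for all $\eta\in\Omega^1$. A left connection is a linear $\nabla:\Omega^1\to\Omega^1\otimes_A\Omega^1$ with $\nabla(a\omega)=a\nabla\omega+\mathrm{d}a\otimes\omega$; a bimodule connection additionally has a bimodule map $\sigma$ with $\nabla(\omega a)=(\nabla\omega)a+\sigma(\omega\otimes\mathrm{d}a)$. $\nabla$ is torsion free if $\wedge\nabla=\mathrm{d}$ on $\Omega^1$, and metric compatible if $(\nabla\otimes\mathrm{id})g+(\sigma\otimes\mathrm{id})(\mathrm{id}\otimes\nabla)g=0$. A quantum Levi-Civita connection (QLC) for $g$ is a torsion free, metric compatible bimodule connection. *)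

From HB Require Import structures.
From mathcomp Require Import all_boot all_order all_algebra.
Set Implicit Arguments. Unset Strict Implicit. Unset Printing Implicit Defensive.
Import GRing.Theory.
Local Open Scope ring_scope.

(* The algebra A = k[x]/(x^2 - mu x - lam), with mu = 0 (case b = false,      *)
(* A = k[x]/(x^2 - lam)) or mu = 1 (case b = true, A = k[x]/(x^2 - x - lam)). *)
(* An element a0 + a1 x of A is represented by the pair (a0, a1) in the k-basis *)
(* {1, x}.                                                                    *)
(* The calculus: Omega^1 is free as a left A-module on omega = dx, so a       *)
(* 1-form f omega is represented by its coefficient f : A.  Likewise          *)
(* Omega^1 (x)_A Omega^1 is free on omega(x)omega, Omega^2 is free on          *)
(* Vol = omega /\ omega, and Omega^1 (x)_A Omega^1 (x)_A Omega^1 is free on   *)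
(* omega(x)omega(x)omega; elements of all these are represented by their      *)
(* coefficient in A.  The commutation relation omega x = mu omega - x omega   *)
(* (i.e. omega x = -x omega, resp. omega x = omega - x omega) says            *)
(* omega a = sigma(a) omega for the algebra automorphism sigma(x) = mu - x.   *)

Section Calc.
Context {k : fieldType}.
Variable (b : bool) (lam : k).

Definition A := (k * k)%type.
Definition mu : k := if b then 1 else 0.

Definition Azero : A := (0, 0).
Definition Aone : A := (1, 0).
Definition Aconst (c : k) : A := (c, 0).
Definition Ax : A := (0, 1).
Definition Aadd (a c : A) : A := (a.1 + c.1, a.2 + c.2).
Definition Aopp (a : A) : A := (- a.1, - a.2).
Definition Ascale (c : k) (a : A) : A := (c * a.1, c * a.2).
(* (a0 + a1 x)(c0 + c1 x) using x^2 = mu x + lam *)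
Definition Amul (a c : A) : A :=
  (a.1 * c.1 + lam * (a.2 * c.2), a.1 * c.2 + a.2 * c.1 + mu * (a.2 * c.2)).
Definition Aunit (a : A) : Prop := exists c : A, Amul a c = Aone.

(* omega a = sig a omega ; sig (a0 + a1 x) = a0 + a1 (mu - x) *)
Definition sig (a : A) : A := (a.1 + mu * a.2, - a.2).

(* d : A -> Omega^1, d(a0 + a1 x) = a1 dx = a1 omega ; coefficient of omega *)
Definition dA (a : A) : A := (a.2, 0).

(* bimodule structures (right actions; left actions are Amul) *)
(* (f omega) a = f sig(a) omega *)
Definition om1_ract (f a : A) : A := Amul f (sig a).
(* (w omega(x)omega) a = w sig(sig a) omega(x)omega *)
Definition tens2_ract (w a : A) : A := Amul w (sig (sig a)).
(* (h Vol) a = h sig(sig a) Vol *)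
Definition om2_ract (h a : A) : A := Amul h (sig (sig a)).

(* (f omega) (x) (h omega) = f sig(h) omega(x)omega *)
Definition tens11 (f h : A) : A := Amul f (sig h).
(* (u omega(x)omega) (x) (h omega) = u sig(sig h) omega(x)omega(x)omega *)
Definition tens21 (u h : A) : A := Amul u (sig (sig h)).
(* (f omega) (x) (v omega(x)omega) = f sig(v) omega(x)omega(x)omega *)
Definition tens12 (f v : A) : A := Amul f (sig v).

(* wedge of 1-forms: (f omega) /\ (h omega) = f sig(h) Vol *)
Definition wedge11 (f h : A) : A := Amul f (sig h).
(* wedge : Omega^1 (x)_A Omega^1 -> Omega^2, the left-module map
   g omega(x)omega |-> g omega/\omega = g Vol *)
Definition wedge2 (w : A) : A := w.
(* d : Omega^1 -> Omega^2, d(f omega) = df /\ omega + f d omega, d omega = 0 *)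
Definition d1 (f : A) : A := wedge11 (dA f) Aone.

Definition Vol : A := Aone.

Definition central_Om2 (h : A) : Prop := forall a : A, Amul a h = om2_ract h a.
Definition central_tens2 (w : A) : Prop := forall a : A, Amul a w = tens2_ract w a.
Definition quantum_symmetric (w : A) : Prop := wedge2 w = Azero.

(* left connections: nabla : Omega^1 -> Omega^1 (x)_A Omega^1, represented by
   N with nabla(f omega) = N f omega(x)omega; k-linear with the left Leibniz
   rule nabla(a xi) = a nabla xi + da (x) xi. *)
Definition is_left_conn (N : A -> A) : Prop :=
  (forall f h, N (Aadd f h) = Aadd (N f) (N h)) /\
  (forall (c : k) f, N (Ascale c f) = Ascale c (N f)) /\
  (forall a f, N (Amul a f) = Aadd (Amul a (N f)) (tens11 (dA a) f)).

Definition torsion_free (N : A -> A) : Prop := forall f, wedge2 (N f) = d1 f.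

Definition bimod_map2 (s : A -> A) : Prop :=
  (forall w w', s (Aadd w w') = Aadd (s w) (s w')) /\
  (forall a w, s (Amul a w) = Amul a (s w)) /\
  (forall a w, s (tens2_ract w a) = tens2_ract (s w) a).

(* bimodule connection (nabla, sigma):
   nabla(xi a) = (nabla xi) a + sigma(xi (x) da) *)
Definition is_bimod_conn (N s : A -> A) : Prop :=
  is_left_conn N /\ bimod_map2 s /\
  (forall f a, N (om1_ract f a) = Aadd (tens2_ract (N f) a) (s (tens11 f (dA a)))).

(* (sigma (x) id) on Omega^1(x)Omega^1(x)Omega^1:
   w omega(x)omega(x)omega = (w omega(x)omega)(x)omega |-> sigma(w omega(x)omega)(x)omega *)
Definition sigma_id (s : A -> A) (w : A) : A := tens21 (s w) Aone.

(* metric compatibility for the element g omega(x)omega = (g omega)(x)omega: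
   (nabla (x) id) g + (sigma (x) id)(id (x) nabla) g = 0 *)
Definition metric_compat (N s : A -> A) (g : A) : Prop :=
  Aadd (tens21 (N g) Aone) (sigma_id s (tens12 g (N Aone))) = Azero.

Definition is_QLC (g : A) (N s : A -> A) : Prop :=
  is_bimod_conn N s /\ torsion_free N /\ metric_compat N s g.

End Calc.

(* Torsion freeness pins the connection down completely: the wedge product
   identifies Omega^1 (x)_A Omega^1 with Omega^2, so [wedge (nabla xi) = d xi]
   forces [nabla (f omega) = df (x) omega], i.e. [nabla omega = 0].  Applying
   this connection to both sides of [omega x = mu omega - x omega] gives
   [sigma (omega (x) omega) = - omega (x) omega].  With [nabla omega = 0],
   metric compatibility of [g omega (x) omega] reduces to [dg = 0], so an
   invertible [g] admits a QLC exactly when it is a nonzero constant. *)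

From Pilot Require Import Defs.
From HB Require Import structures.
From mathcomp Require Import all_boot all_order all_algebra.
From mathcomp Require Import ring.
Local Open Scope ring_scope.
Import GRing.Theory.

Set Implicit Arguments.
Unset Strict Implicit.

Ltac A_ring :=
  rewrite /sigma_id /d1 /wedge11 /tens11 /tens21 /tens12 /tens2_ract /om1_ract
          /om2_ract /Vol /dA /Amul /Aadd /Aone /Azero /Ascale /Aopp /Aconst
          /Defs.sig /=;
  congr pair; ring.

Section UniversalCalculus.
Variables (k : fieldType) (b : bool) (lam : k).
Implicit Types (a f g w : @A k) (N s : @A k -> @A k).

Lemma AmulC a w : Amul b lam a w = Amul b lam w a.
Proof. by case: a w => [a1 a2] [w1 w2]; A_ring. Qed.

Lemma sigK : involutive (@Defs.sig k b).
Proof. by case=> a1 a2; A_ring. Qed.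

Lemma Vol_central : central_Om2 b lam Vol.
Proof. by move=> a; rewrite /om2_ract sigK AmulC. Qed.

Lemma tens2_central w : central_tens2 b lam w.
Proof. by move=> a; rewrite /tens2_ract sigK AmulC. Qed.

Lemma quantum_symmetric_eq0 w : quantum_symmetric w -> w = Azero.
Proof. by []. Qed.

Lemma d1E f : d1 b lam f = (f.2, 0).
Proof. by case: f => f1 f2; A_ring. Qed.

Lemma torsion_free_d1 : torsion_free b lam (d1 b lam).
Proof. by []. Qed.

Lemma torsion_freeE N : torsion_free b lam N -> N =1 d1 b lam.
Proof. by []. Qed.

Lemma d1_left_conn : is_left_conn b lam (d1 b lam).
Proof.
split; [|split].
- by move=> [f1 f2] [h1 h2]; rewrite !d1E; A_ring.
- by move=> c [f1 f2]; rewrite !d1E; A_ring.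
- by move=> [a1 a2] [f1 f2]; rewrite !d1E; A_ring.
Qed.

Lemma Aopp_bimod_map2 : bimod_map2 b lam (@Aopp k).
Proof.
split; [|split].
- by move=> [w1 w2] [v1 v2]; A_ring.
- by move=> [a1 a2] [w1 w2]; A_ring.
- by move=> [a1 a2] [w1 w2]; A_ring.
Qed.

Lemma torsion_free_bimod_conn N :
  is_left_conn b lam N -> torsion_free b lam N -> is_bimod_conn b lam N (@Aopp k).
Proof.
move=> conn_N /torsion_freeE NE; split=> //; split; first exact: Aopp_bimod_map2.
by move=> [f1 f2] [a1 a2]; rewrite !NE !d1E; A_ring.
Qed.

Lemma bimod_map2_0 s : bimod_map2 b lam s -> s Azero = Azero.
Proof.
case=> s_add _; have := s_add Azero Azero.
rewrite [Aadd _ _]/Aadd /Azero /= !addr0.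
case: (s (0, 0)) => x y [x_2x y_2y].
have double_eq0 (z : k) : z = z + z -> z = 0.
  by move=> z_2z; apply: (addrI z); rewrite addr0 -z_2z.
by rewrite (double_eq0 _ x_2x) (double_eq0 _ y_2y).
Qed.

Lemma metric_compatE N s g :
  torsion_free b lam N -> bimod_map2 b lam s ->
  metric_compat b lam N s g <-> g.2 = 0.
Proof.
move=> /torsion_freeE NE /bimod_map2_0 s0.
rewrite /metric_compat /sigma_id !NE !d1E.
have -> : tens12 b lam g (Aone.2, 0) = Azero by case: g => g1 g2; A_ring.
rewrite s0; case: g => g1 g2 /=.
have -> : Aadd (tens21 b lam (g2, 0) Aone) (tens21 b lam Azero Aone) = (g2, 0)
  by A_ring.
by split=> [[]|->].
Qed.

Lemma Aunit_const_neq0 g : Aunit b lam g -> g.2 = 0 -> g.1 != 0.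
Proof.
case: g => g1 g2 [[c1 c2]] + /= g2_0; rewrite g2_0 /Amul /Aone /= => -[+ _].
rewrite !mul0r mulr0 addr0.
by apply: contra_eq_neq => ->; rewrite mul0r eq_sym oner_eq0.
Qed.

Lemma QLC_const c : is_QLC b lam (Aconst c) (d1 b lam) (@Aopp k).
Proof.
split; first exact: torsion_free_bimod_conn d1_left_conn torsion_free_d1.
split=> //; exact/(metric_compatE _ torsion_free_d1 Aopp_bimod_map2).
Qed.

End UniversalCalculus.

Theorem mainTheorem2 (k : fieldType) (b : bool) (lam : k) :
  (* (a) *)
  central_Om2 b lam Vol /\
  (forall g : @A k, central_tens2 b lam g) /\
  (forall g : @A k, g <> Azero -> ~ quantum_symmetric g) /\
  (* (b) *)
  (exists N : @A k -> @A k, is_left_conn b lam N /\ torsion_free b lam N) /\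
  (forall N1 N2 : @A k -> @A k,
      is_left_conn b lam N1 -> torsion_free b lam N1 ->
      is_left_conn b lam N2 -> torsion_free b lam N2 -> N1 =1 N2) /\
  (forall N : @A k -> @A k, is_left_conn b lam N -> torsion_free b lam N ->
      N Aone = Azero /\
      exists s : @A k -> @A k, is_bimod_conn b lam N s /\ s Aone = Aopp Aone) /\
  (* (c) *)
  (forall g : @A k, Aunit b lam g ->
      ((exists N s : @A k -> @A k, is_QLC b lam g N s) <->
         (exists c : k, c != 0 /\ g = Aconst c)) /\
      (forall N1 s1 N2 s2 : @A k -> @A k,
          is_QLC b lam g N1 s1 -> is_QLC b lam g N2 s2 -> N1 =1 N2) /\
      (forall N s : @A k -> @A k, is_QLC b lam g N s -> N Aone = Azero)).
Proof.
have nabla_omega N : torsion_free b lam N -> N Aone = Azero.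
  by move=> /torsion_freeE ->; rewrite d1E.
split; first exact: Vol_central.
split; first exact: tens2_central.
split; first by move=> g g_neq0 /quantum_symmetric_eq0.
split; first by exists (d1 b lam); split; [exact: d1_left_conn|].
split; first by move=> N1 N2 _ /torsion_freeE E1 _ /torsion_freeE E2 f; rewrite E1 E2.
split.
  move=> N conn_N tf_N; split; first exact: nabla_omega.
  by exists (@Aopp k); split; [exact: torsion_free_bimod_conn|].
move=> g unit_g; split; [split|split].
- move=> [N [s [[_ [bim_s _]] [tf_N compat]]]].
  have g2_0 := proj1 (metric_compatE _ tf_N bim_s) compat.
  exists g.1; split; first exact: Aunit_const_neq0 unit_g g2_0.
  by case: g g2_0 {unit_g compat} => g1 g2 /= ->.
- by move=> [c [_ ->]]; exists (d1 b lam), (@Aopp k); exact: QLC_const.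
- by move=> N1 s1 N2 s2 [_ [/torsion_freeE E1 _]] [_ [/torsion_freeE E2 _]] f;
    rewrite E1 E2.
- by move=> N s [_ [tf_N _]]; exact: nabla_omega.
Qed.
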